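(* Let $(x,q)\in\mathbf J$ with $q$ not an integer, and assume the greedy expansion $(b_i(x,q))$ is infinite (has infinitely many nonzero digits). If $(y_n,r_n)$ is any sequence in $\mathbf J$ converging to $(x,q)$, then both $(a_i(y_n,r_n))_{i\ge1}$ and $(b_i(y_n,r_n))_{i\ge1}$ converge coordinate-wise to $(b_i(x,q))_{i\ge1}=(a_i(x,q))_{i\ge1}$.
   Context: For real $q>1$ let $\lceil q\rceil$ be the smallest integer $\ge q$ and $A_q=\{0,\ldots,\lceil q\rceil-1\}$. Let $\mathbf J$ be the set of $(x,q)$ with $q>1$ and $x\in J_q:=[0,(\lceil q\rceil-1)/(q-1)]$. For $(x,q)\in\mathbf J$: the quasi-greedy expansion $(a_i(x,q))$ is $0^\infty$ if $x=0$, and for $x>0$, recursively $a_n(x,q)$ is the largest element of $A_q$ with $\sum_{i=1}^n a_i(x,q)q^{-i}<x$; the greedy expansion $(b_i(x,q))$ is defined recursively with $b_n(x,q)$ the largest element of $A_q$ with $\sum_{i=1}^n b_i(x,q)q^{-i}\le x$. *)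

From Stdlib Require Import Reals Lra Lia ZArith.
Open Scope R_scope.

Definition maxdigit (q : R) : nat := Z.to_nat (Zceil q - 1).

Definition in_alphabet (q : R) (d : nat) : Prop := (d <= maxdigit q)%nat.

Definition inJ (x q : R) : Prop :=
  1 < q /\ 0 <= x /\ x <= (IZR (Zceil q) - 1) / (q - 1).

Fixpoint largest (M : nat) (p : nat -> bool) : nat :=
  match M with
  | O => O
  | S m => if p (S m) then S m else largest m p
  end.

Definition Rleb (a b : R) : bool := if Rle_dec a b then true else false.
Definition Rltb (a b : R) : bool := if Rlt_dec a b then true else false.

(* Greedy expansion.  greedy_sum x q n = sum_{i=1}^n b_i q^{-i};
   the digit b_{n+1} is the largest d in A_q with
   greedy_sum n + d q^{-(n+1)} <= x. *)
Definition greedy_next (x q s : R) (n : nat) : nat :=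
  largest (maxdigit q) (fun d => Rleb (s + INR d / q ^ n) x).

Fixpoint greedy_sum (x q : R) (n : nat) : R :=
  match n with
  | O => 0
  | S m => let s := greedy_sum x q m in
           s + INR (greedy_next x q s (S m)) / q ^ (S m)
  end.

(* b x q i = b_i(x,q) for i >= 1 (index 0 is unused and set to 0) *)
Definition b (x q : R) (i : nat) : nat :=
  match i with
  | O => O
  | S m => greedy_next x q (greedy_sum x q m) (S m)
  end.

(* Quasi-greedy expansion: 0^infty if x = 0; otherwise the digit a_{n+1}
   is the largest d in A_q with qg_sum n + d q^{-(n+1)} < x. *)
Definition qg_next (x q s : R) (n : nat) : nat :=
  if Req_EM_T x 0 then O
  else largest (maxdigit q) (fun d => Rltb (s + INR d / q ^ n) x).

Fixpoint qg_sum (x q : R) (n : nat) : R :=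
  match n with
  | O => 0
  | S m => let s := qg_sum x q m in
           s + INR (qg_next x q s (S m)) / q ^ (S m)
  end.

Definition a (x q : R) (i : nat) : nat :=
  match i with
  | O => O
  | S m => qg_next x q (qg_sum x q m) (S m)
  end.

(* Since the greedy expansion of x in base q never terminates, every partial
   greedy sum s_k stays strictly below x, and for every candidate digit d the
   comparison of s_k + d q^(-k-1) with x is strict in both directions.  Strict
   inequalities between finitely many continuous expressions survive small
   perturbations of (x, q), and as q is not an integer the alphabet A_r is
   A_q for r close to q.  Hence, by induction on k, for (y, r) close enough
   to (x, q) the greedy and the quasi-greedy algorithms choose the same first
   k digits as the greedy algorithm for (x, q).  Constant sequences give
   a(x, q) = b(x, q). *)

From Stdlib Require Import Reals Lra Lia ZArith.
From Coquelicot Require Import Coquelicot.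
Open Scope R_scope.

Lemma eventually_lt_lim (u v : nat -> R) (l m : R) :
  is_lim_seq u l -> is_lim_seq v m -> l < m -> eventually (fun n => u n < v n).
Proof.
  intros Hu Hv Hlm.
  assert (Hvu : is_lim_seq (fun n => v n - u n) (m - l)) by now apply is_lim_seq_minus'.
  apply is_lim_seq_spec in Hvu.
  destruct (Hvu (mkposreal (m - l) ltac:(lra))) as [N HN].
  exists N. intros n Hn. specialize (HN n Hn). simpl in HN.
  apply Rabs_def2 in HN. lra.
Qed.

Lemma eventually_forall_le (P : nat -> nat -> Prop) (M : nat) :
  (forall d, (d <= M)%nat -> eventually (P d)) ->
  eventually (fun n => forall d, (d <= M)%nat -> P d n).
Proof.
  induction M as [|M IH]; intros H.
  - apply (filter_imp (P 0%nat)); [|apply H; lia].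
    intros n Hn d Hd. now replace d with 0%nat by lia.
  - apply (filter_imp (fun n => (forall d, (d <= M)%nat -> P d n) /\ P (S M) n)).
    + intros n [HM HSM] d Hd.
      destruct (Nat.eq_dec d (S M)) as [->|]; [exact HSM|apply HM; lia].
    + apply filter_and; [apply IH; auto|apply H; lia].
Qed.

Lemma is_lim_seq_pow (t : nat -> R) (l : R) (j : nat) :
  is_lim_seq t l -> is_lim_seq (fun n => t n ^ j) (l ^ j).
Proof.
  intros Ht. induction j as [|j IH]; simpl.
  - apply is_lim_seq_const.
  - now apply is_lim_seq_mult'.
Qed.

Lemma largest_le (M : nat) (p : nat -> bool) : (largest M p <= M)%nat.
Proof. induction M; simpl; [lia|]. destruct (p (S M)); lia. Qed.

Lemma largest_true (M : nat) (p : nat -> bool) :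
  (1 <= largest M p)%nat -> p (largest M p) = true.
Proof. induction M; simpl; [lia|]. destruct (p (S M)) eqn:E; auto. Qed.

Lemma largest_above (M : nat) (p : nat -> bool) (d : nat) :
  (largest M p < d <= M)%nat -> p d = false.
Proof.
  induction M; simpl; [lia|]. destruct (p (S M)) eqn:E; [lia|].
  intros Hd. destruct (Nat.eq_dec d (S M)) as [->|]; [exact E|apply IHM; lia].
Qed.

Lemma largest_char (M : nat) (p : nat -> bool) (v : nat) :
  (v <= M)%nat ->
  (forall d, (1 <= d <= M)%nat -> p d = true <-> (d <= v)%nat) ->
  largest M p = v.
Proof.
  induction M as [|M IH]; intros Hv H; simpl; [lia|].
  destruct (p (S M)) eqn:E.
  - apply (H (S M)) in E; lia.
  - assert (~ (S M <= v)%nat) by (intro C; apply (H (S M)) in C; [congruence|lia]).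
    apply IH; [lia|]. intros d Hd. apply H; lia.
Qed.

Lemma Rleb_true (u v : R) : Rleb u v = true <-> u <= v.
Proof. unfold Rleb. destruct (Rle_dec u v); split; intros; try congruence; lra. Qed.

Lemma Rltb_true (u v : R) : Rltb u v = true <-> u < v.
Proof. unfold Rltb. destruct (Rlt_dec u v); split; intros; try congruence; lra. Qed.

Lemma greedy_next_pos_lt (y t s : R) (j : nat) :
  0 < t -> (1 <= greedy_next y t s j)%nat -> s < y.
Proof.
  intros Ht Hd. unfold greedy_next in Hd.
  pose proof (largest_true _ _ Hd) as Hle. apply Rleb_true in Hle.
  apply le_INR in Hd. simpl in Hd.
  assert (0 < INR (largest (maxdigit t) (fun d => Rleb (s + INR d / t ^ j) y)) / t ^ j)
    by (apply Rdiv_lt_0_compat; [lra|now apply pow_lt]).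
  lra.
Qed.

Definition separated (M : nat) (t y s : R) (j v : nat) : Prop :=
  forall d, (1 <= d <= M)%nat ->
    ((d <= v)%nat -> s + INR d / t ^ j < y) /\ ((v < d)%nat -> y < s + INR d / t ^ j).

Lemma separated_next_digits (t y s : R) (j v : nat) :
  y <> 0 -> (v <= maxdigit t)%nat -> separated (maxdigit t) t y s j v ->
  greedy_next y t s j = v /\ qg_next y t s j = v.
Proof.
  intros Hy Hv Hsep. split.
  - unfold greedy_next. apply largest_char; auto.
    intros d Hd. rewrite Rleb_true. destruct (Hsep d Hd) as [Hlt Hgt].
    split; intros H.
    + destruct (le_lt_dec d v) as [|Hvd]; auto. specialize (Hgt Hvd). lra.
    + specialize (Hlt H). lra.
  - unfold qg_next. destruct (Req_EM_T y 0); [contradiction|].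
    apply largest_char; auto.
    intros d Hd. rewrite Rltb_true. destruct (Hsep d Hd) as [Hlt Hgt].
    split; intros H.
    + destruct (le_lt_dec d v) as [|Hvd]; auto. specialize (Hgt Hvd). lra.
    + now apply Hlt.
Qed.

Lemma separated_eventually (M : nat) (tn yn sn : nat -> R) (t y s : R) (j v : nat) :
  is_lim_seq tn t -> is_lim_seq yn y -> is_lim_seq sn s -> t <> 0 ->
  separated M t y s j v -> eventually (fun n => separated M (tn n) (yn n) (sn n) j v).
Proof.
  intros Ht Hy Hs Ht0 Hsep.
  apply (filter_imp (fun n => forall d, (d <= M)%nat -> (1 <= d)%nat ->
    ((d <= v)%nat -> sn n + INR d / tn n ^ j < yn n) /\
    ((v < d)%nat -> yn n < sn n + INR d / tn n ^ j))).
  { intros n H d Hd. now apply H. }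
  apply eventually_forall_le. intros d HdM.
  destruct (le_lt_dec 1 d) as [Hd1|Hd1]; [|exists 0%nat; lia].
  assert (Hlim : is_lim_seq (fun n => sn n + INR d / tn n ^ j) (s + INR d / t ^ j)).
  { apply is_lim_seq_plus'; auto. apply is_lim_seq_div'.
    - apply is_lim_seq_const.
    - now apply is_lim_seq_pow.
    - now apply pow_nonzero. }
  destruct (Hsep d (conj Hd1 HdM)) as [Hlt Hgt].
  destruct (le_lt_dec d v) as [Hdv|Hvd].
  - apply (filter_imp (fun n => sn n + INR d / tn n ^ j < yn n)).
    + intros n Hn _. split; [auto|lia].
    + exact (eventually_lt_lim _ _ _ _ Hlim Hy (Hlt Hdv)).
  - apply (filter_imp (fun n => yn n < sn n + INR d / tn n ^ j)).
    + intros n Hn _. split; [lia|auto].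
    + exact (eventually_lt_lim _ _ _ _ Hy Hlim (Hgt Hvd)).
Qed.

Lemma maxdigit_eventually (r : nat -> R) (q : R) :
  is_lim_seq r q -> (forall z : Z, q <> IZR z) ->
  eventually (fun n => maxdigit (r n) = maxdigit q).
Proof.
  intros Hr Hnz. pose proof (Zceil_bound q) as [Hlo Hhi].
  assert (Hq : q < IZR (Zceil q)) by (pose proof (Hnz (Zceil q)); lra).
  apply (filter_imp (fun n => IZR (Zceil q) - 1 < r n /\ r n < IZR (Zceil q))).
  - intros n Hn. unfold maxdigit. rewrite (Zceil_eq (Zceil q) (r n)); [reflexivity|lra].
  - apply filter_and.
    + exact (eventually_lt_lim _ _ _ _ (is_lim_seq_const _) Hr Hlo).
    + exact (eventually_lt_lim _ _ _ _ Hr (is_lim_seq_const _) Hq).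
Qed.

Fixpoint digit_sum (c : nat -> nat) (t : R) (k : nat) : R :=
  match k with
  | O => 0
  | S m => digit_sum c t m + INR (c (S m)) / t ^ S m
  end.

Lemma greedy_sum_digit_sum (y t : R) (k : nat) :
  greedy_sum y t k = digit_sum (b y t) t k.
Proof. induction k as [|k IH]; simpl; [reflexivity|]. now rewrite IH. Qed.

Lemma qg_sum_digit_sum (y t : R) (k : nat) :
  qg_sum y t k = digit_sum (a y t) t k.
Proof. induction k as [|k IH]; simpl; [reflexivity|]. now rewrite IH. Qed.

Lemma digit_sum_ext (c c' : nat -> nat) (t : R) (k : nat) :
  (forall i, (1 <= i <= k)%nat -> c i = c' i) -> digit_sum c t k = digit_sum c' t k.
Proof.
  induction k as [|k IH]; intros H; simpl; [reflexivity|].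
  rewrite IH by (intros; apply H; lia). rewrite (H (S k)) by lia. reflexivity.
Qed.

Lemma digit_sum_le (c : nat -> nat) (t : R) (k l : nat) :
  0 < t -> (k <= l)%nat -> digit_sum c t k <= digit_sum c t l.
Proof.
  intros Ht Hkl. induction Hkl as [|l _ IH]; [lra|].
  change (digit_sum c t k <= digit_sum c t l + INR (c (S l)) / t ^ S l).
  assert (0 <= INR (c (S l)) / t ^ S l)
    by (apply Rdiv_le_0_compat; [apply pos_INR|now apply pow_lt]).
  lra.
Qed.

Lemma is_lim_seq_digit_sum (c : nat -> nat) (tn : nat -> R) (t : R) (k : nat) :
  is_lim_seq tn t -> t <> 0 ->
  is_lim_seq (fun n => digit_sum c (tn n) k) (digit_sum c t k).
Proof.
  intros Ht Ht0. induction k as [|k IH]; cbn [digit_sum].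
  - apply is_lim_seq_const.
  - apply is_lim_seq_plus'; auto. apply is_lim_seq_div'.
    + apply is_lim_seq_const.
    + now apply is_lim_seq_pow.
    + now apply pow_nonzero.
Qed.

Section InfiniteGreedyExpansion.

Variables x q : R.
Hypothesis q_gt1 : 1 < q.
Hypothesis b_infinite : forall N : nat, exists i : nat, (N < i)%nat /\ b x q i <> 0%nat.

Lemma greedy_sum_lt (k : nat) : digit_sum (b x q) q k < x.
Proof.
  destruct (b_infinite k) as [[|m] [Hkm Hbm]]; [lia|].
  apply Rle_lt_trans with (digit_sum (b x q) q m); [apply digit_sum_le; [lra|lia]|].
  rewrite <- greedy_sum_digit_sum.
  apply (greedy_next_pos_lt x q _ (S m)); [lra|]. simpl in Hbm. lia.
Qed.

Lemma x_pos : 0 < x.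
Proof. exact (greedy_sum_lt 0). Qed.

Lemma b_le_maxdigit (k : nat) : (b x q (S k) <= maxdigit q)%nat.
Proof. apply largest_le. Qed.

Lemma greedy_separated (k : nat) :
  separated (maxdigit q) q x (digit_sum (b x q) q k) (S k) (b x q (S k)).
Proof.
  intros d Hd. split; intros Hdb.
  - pose proof (greedy_sum_lt (S k)) as Hlt. cbn [digit_sum] in Hlt.
    assert (INR d / q ^ S k <= INR (b x q (S k)) / q ^ S k).
    { apply Rmult_le_compat_r; [left; apply Rinv_0_lt_compat, pow_lt; lra|].
      now apply le_INR. }
    lra.
  - simpl in Hdb. rewrite greedy_sum_digit_sum in Hdb.
    pose proof (largest_above _ _ d (conj Hdb (proj2 Hd))) as Hfalse.
    destruct (Rle_dec (digit_sum (b x q) q k + INR d / q ^ S k) x) as [Hle|]; [|lra].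
    apply Rleb_true in Hle. congruence.
Qed.

Hypothesis q_not_integer : forall z : Z, q <> IZR z.
Variables y r : nat -> R.
Hypothesis y_lim : is_lim_seq y x.
Hypothesis r_lim : is_lim_seq r q.

Lemma digits_eventually (k : nat) :
  eventually (fun n => forall i, (1 <= i <= k)%nat ->
    a (y n) (r n) i = b x q i /\ b (y n) (r n) i = b x q i).
Proof.
  induction k as [|k IH]; [exists 0%nat; intros; lia|].
  assert (Hsep := separated_eventually (maxdigit q) r y (fun n => digit_sum (b x q) (r n) k)
    q x _ (S k) _ r_lim y_lim (is_lim_seq_digit_sum _ _ _ k r_lim ltac:(lra))
    ltac:(lra) (greedy_separated k)).
  pose proof (eventually_lt_lim _ _ _ _ (is_lim_seq_const 0) y_lim x_pos) as Hypos.
  pose proof (maxdigit_eventually r q r_lim q_not_integer) as Hmax.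
  generalize (filter_and _ _ IH (filter_and _ _ Hsep (filter_and _ _ Hypos Hmax))).
  apply filter_imp. intros n [Hprefix [Hsepn [Hyn Hmaxn]]].
  assert (Hsum_a : qg_sum (y n) (r n) k = digit_sum (b x q) (r n) k).
  { rewrite qg_sum_digit_sum. apply digit_sum_ext. intros. now apply Hprefix. }
  assert (Hsum_b : greedy_sum (y n) (r n) k = digit_sum (b x q) (r n) k).
  { rewrite greedy_sum_digit_sum. apply digit_sum_ext. intros. now apply Hprefix. }
  rewrite <- Hmaxn in Hsepn.
  destruct (separated_next_digits (r n) (y n) _ (S k) (b x q (S k)) ltac:(lra)
    ltac:(rewrite Hmaxn; apply b_le_maxdigit) Hsepn) as [Hb Ha].
  intros i Hi. destruct (Nat.eq_dec i (S k)) as [->|]; [|apply Hprefix; lia].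
  simpl. now rewrite Hsum_a, Hsum_b.
Qed.

End InfiniteGreedyExpansion.

Theorem proposition2p6 (x q : R) (y r : nat -> R) :
  inJ x q ->
  (forall z : Z, q <> IZR z) ->
  (forall N : nat, exists i : nat, (N < i)%nat /\ b x q i <> 0%nat) ->
  (forall n : nat, inJ (y n) (r n)) ->
  Un_cv y x -> Un_cv r q ->
  (forall i : nat, (1 <= i)%nat -> a x q i = b x q i) /\
  (forall i : nat, (1 <= i)%nat ->
     exists N : nat, forall n : nat, (N <= n)%nat ->
       a (y n) (r n) i = b x q i /\ b (y n) (r n) i = b x q i).
Proof.
  intros [Hq _] Hnz Hinf _ Hy Hr.
  apply is_lim_seq_Reals in Hy, Hr.
  split.
  - intros i Hi.
    destruct (digits_eventually x q Hq Hinf Hnz (fun _ => x) (fun _ => q)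
      (is_lim_seq_const x) (is_lim_seq_const q) i) as [N HN].
    apply (HN N (le_n N) i). lia.
  - intros i Hi.
    destruct (digits_eventually x q Hq Hinf Hnz y r Hy Hr i) as [N HN].
    exists N. intros n Hn. apply (HN n Hn i). lia.
Qed.
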